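(* For real $\nu$ let $K_\nu$ denote the modified Bessel function of the second kind. The following assertions are true: (a) $u\mapsto K_{\nu}'(u)/K_{\nu}^2(u)$ is strictly decreasing on $(0,\infty)$ for all $|\nu|\geq 1$; (b) $u\mapsto K_{\nu}'(u)/K_{\nu}(u)$ is strictly increasing on $(0,\infty)$ for all $\nu\in\mathbb{R}$; (c) $u\mapsto uK_{\nu}'(u)/K_{\nu}(u)$ is strictly decreasing on $(0,\infty)$ for all $\nu\in\mathbb{R}$; (d) $u\mapsto uK_{\nu}'(u)$ is strictly increasing on $(0,\infty)$ for all $\nu\in\mathbb{R}$; (e) $u\mapsto u^2K_{\nu}'(u)$ is strictly increasing on $(0,\infty)$ for all $|\nu|\geq 5/4$; (f) $u\mapsto u^2K_{\nu}'(u)$ is strictly increasing on $(2,\infty)$ for all $\nu\in\mathbb{R}$. In particular, for all $u_1,u_2>0$ and $|\nu|\geq 1$ the following chain of inequalities holds: $$\frac{2K_{\nu}(u_1)K_{\nu}(u_2)}{K_{\nu}(u_1)+K_{\nu}(u_2)}\leq K_{\nu}\left(\frac{u_1+u_2}{2}\right)\leq \sqrt{K_{\nu}(u_1)K_{\nu}(u_2)} \leq K_{\nu}\left(\sqrt{u_1u_2}\right)\leq \frac{K_{\nu}(u_1)+K_{\nu}(u_2)}{2}.$$ Moreover, the second, third and fourth inequalities hold true for all $\nu\in\mathbb{R}$. In addition, for $|\nu|\geq 5/4$ and $u_1,u_2>0$, $$K_{\nu}\left(\frac{2u_1u_2}{u_1+u_2}\right)\leq\frac{K_{\nu}(u_1)+K_{\nu}(u_2)}{2},$$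 and this last inequality holds true for all $u_1,u_2>2$ and all $\nu\in\mathbb{R}$. In each of these inequalities equality holds if and only if $u_1=u_2$.
   Context: $K_\nu$ is the modified Bessel function of the second kind (MacDonald function), which for $u>0$, $\nu\in\mathbb{R}$ has the representation $K_{\nu}(u)=\int_0^{\infty}e^{-u\cosh t}\cosh(\nu t)\,dt>0$; equivalently $K_\nu(u)=\frac{\pi}{2}\frac{I_{-\nu}(u)-I_\nu(u)}{\sin \nu\pi}$ (limiting value for integer $\nu$), where $I_\nu$ is the modified Bessel function of the first kind. *)

From Stdlib Require Import Reals.
From Coquelicot Require Import Coquelicot.
Open Scope R_scope.

Definition BesselK (nu u : R) : R :=
  RInt_gen (fun t => exp (- (u * cosh t)) * cosh (nu * t))
           (at_point 0) (Rbar_locally p_infty).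

Definition dBesselK (nu u : R) : R := Derive (BesselK nu) u.

Definition strict_incr_from (a : R) (f : R -> R) : Prop :=
  forall x y, a < x -> x < y -> f x < f y.
Definition strict_decr_from (a : R) (f : R -> R) : Prop :=
  forall x y, a < x -> x < y -> f y < f x.

Definition le_eq_iff (a b u1 u2 : R) : Prop := a <= b /\ (a = b <-> u1 = u2).

(* Differentiating under the integral sign and integrating by
   parts in [t] shows that [K = K_nu] solves Bessel's equation
   [u^2 K'' + u K' - (u^2 + nu^2) K = 0], so that [p = - u K' / K] solves the
   Riccati equation [u p' = p^2 - u^2 - nu^2].  Each monotonicity statement
   (a)-(f) reduces to a bound on [p]: [sqrt (u^2 + nu^2) < p] (a solution below
   this curve would decrease and become negative), and [p < s] for every
   nonnegative [s] with [u s' < s^2 - u^2 - nu^2] (otherwise [p - s] would blow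
   up), applied to [s = 1/2 + sqrt (1/4 + u^2 + nu^2)] and [s = u^2 + nu^2].
   The mean inequalities are midpoint convexity of [1/K], [ln K],
   [- ln K (exp x)], [K (exp x)] and [K (1/x)], whose derivatives are
   monotone by (a)-(e). *)

From Stdlib Require Import Reals Lra Psatz Classical FunctionalExtensionality.
From Coquelicot Require Import Coquelicot.
Open Scope R_scope.

Lemma MVT_is_derive (f df : R -> R) a b : a < b ->
  (forall c, a <= c <= b -> is_derive f c (df c)) ->
  exists c, a < c < b /\ f b - f a = df c * (b - a).
Proof.
  intros Hab Hd. destruct (MVT_cor2 f df a b Hab) as [c [Hc Hin]].
  - intros c Hc. apply is_derive_Reals, Hd, Hc.
  - exists c; split; [exact Hin | exact Hc].
Qed.

Lemma strict_incr_from_derive (f df : R -> R) a :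
  (forall x, a < x -> is_derive f x (df x)) -> (forall x, a < x -> 0 < df x) ->
  strict_incr_from a f.
Proof.
  intros Hd Hpos x y Hx Hxy.
  destruct (MVT_is_derive f df x y Hxy) as [c [Hc Heq]].
  - intros c Hc; apply Hd; lra.
  - assert (0 < df c * (y - x)) by (apply Rmult_lt_0_compat; [apply Hpos |]; lra).
    lra.
Qed.

Lemma strict_decr_from_derive (f df : R -> R) a :
  (forall x, a < x -> is_derive f x (df x)) -> (forall x, a < x -> df x < 0) ->
  strict_decr_from a f.
Proof.
  intros Hd Hneg x y Hx Hxy.
  enough (- f x < - f y) by lra.
  apply (strict_incr_from_derive (fun x => - f x) (fun x => - df x) a); [| | lra | lra].
  - intros z Hz. apply (is_derive_opp f), Hd, Hz.
  - intros z Hz. specialize (Hneg z Hz). lra.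
Qed.

Lemma derive_nonpos_le (f df : R -> R) x y : x <= y ->
  (forall c, x <= c <= y -> is_derive f c (df c)) ->
  (forall c, x < c < y -> df c <= 0) ->
  f y <= f x.
Proof.
  intros Hxy Hd Hneg. destruct (Req_dec x y) as [<- | Hne]; [lra |].
  destruct (MVT_is_derive f df x y) as [c [Hc Heq]]; [lra | exact Hd |].
  assert (df c * (y - x) <= 0) by (apply Rmult_le_0_r; [apply Hneg |]; lra).
  lra.
Qed.

Lemma is_derive_eq_at_contact (f g : R -> R) df dg a u : a < u ->
  (forall x, a < x -> f x <= g x) -> f u = g u ->
  is_derive f u df -> is_derive g u dg -> df = dg.
Proof.
  intros Hau Hle Heq Hf Hg.
  assert (Hd : is_derive (fun x => g x - f x) u (dg - df)) by
    (apply (is_derive_minus g f); assumption).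
  apply is_derive_Reals in Hd.
  assert (pr : derivable_pt (fun x => g x - f x) u) by (exists (dg - df); exact Hd).
  enough (dg - df = 0) by lra.
  rewrite <- (derive_pt_eq_0 _ u _ pr Hd).
  apply (deriv_minimum _ ((a + u) / 2) (u + 1) u pr); [lra | lra |].
  intros x Hx1 Hx2. specialize (Hle x ltac:(lra)). lra.
Qed.

(* [s] is the supremum of the initial segments on which [f < c]. *)
Lemma first_crossing (f : R -> R) x0 x1 c :
  (forall x, x0 <= x -> continuous f x) -> f x0 < c -> x0 <= x1 -> c <= f x1 ->
  exists s, x0 < s /\ c <= f s /\ forall y, x0 <= y < s -> f y < c.
Proof.
  intros Hcont Hx0 Hx01 Hx1.
  set (E := fun x => x0 <= x /\ forall y, x0 <= y <= x -> f y < c).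
  assert (HE0 : E x0) by (split; [lra | intros y Hy; replace y with x0 by lra; exact Hx0]).
  destruct (completeness E) as [s [Hub Hlub]].
  - exists x1. intros x [Hx Hy]. destruct (Rle_dec x x1) as [|Hgt]; [assumption |].
    specialize (Hy x1 ltac:(lra)). lra.
  - exists x0; exact HE0.
  - assert (Hs0 : x0 <= s) by (apply Hub, HE0).
    assert (Hbefore : forall y, x0 <= y < s -> f y < c).
    { intros y Hy. destruct (classic (exists x, E x /\ y <= x)) as [[x [[_ Hx] Hyx]] | Hno].
      - apply Hx; lra.
      - assert (s <= y); [| lra]. apply Hlub. intros x Ex.
        destruct (Rle_dec x y) as [|Hgt]; [assumption |].
        exfalso. apply Hno. exists x. split; [exact Ex | lra]. }
    assert (Hcs : c <= f s).
    { destruct (Rle_dec c (f s)) as [|Hlt]; [assumption | exfalso].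
      destruct (proj1 (filterlim_locally f (f s)) (Hcont s Hs0)
                 (mkposreal (c - f s) ltac:(lra))) as [d Hd].
      assert (Hfurther : E (s + d / 2)).
      { pose proof (cond_pos d). split; [lra |]. intros y Hy.
        destruct (Rlt_dec y s); [apply Hbefore; lra |].
        assert (Hy' : Rabs (f y - f s) < c - f s)
          by (apply Hd; apply Rabs_lt_between'; simpl; lra).
        apply Rabs_lt_between' in Hy'. lra. }
      pose proof (Hub _ Hfurther). pose proof (cond_pos d). lra. }
    exists s. split; [| split; assumption].
    destruct (Req_dec x0 s) as [<- |]; lra.
Qed.

Lemma stays_below (f df : R -> R) x0 c :
  (forall x, x0 <= x -> is_derive f x (df x)) -> f x0 < c ->
  (forall x, x0 <= x -> f x < c -> df x <= 0) ->
  forall x, x0 <= x -> f x < c.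
Proof.
  intros Hd Hx0 Hneg x1 Hx1.
  destruct (Rlt_dec (f x1) c) as [|Hge]; [assumption | exfalso].
  destruct (first_crossing f x0 x1 c) as [s [Hs [Hfs Hbefore]]]; try lra.
  { intros x Hx. apply (@ex_derive_continuous R_AbsRing R_NormedModule). eexists. apply Hd, Hx. }
  assert (f s <= f x0); [| lra].
  apply (derive_nonpos_le f df); [lra | intros; apply Hd; lra |].
  intros y Hy. apply Hneg; [lra | apply Hbefore; lra].
Qed.

Lemma stays_above (f df : R -> R) x0 c :
  (forall x, x0 <= x -> is_derive f x (df x)) -> c < f x0 ->
  (forall x, x0 <= x -> c < f x -> 0 <= df x) ->
  forall x, x0 <= x -> c < f x.
Proof.
  intros Hd Hx0 Hpos x Hx.
  enough (- f x < - c) by lra.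
  apply (stays_below (fun x => - f x) (fun x => - df x) x0); [| lra | | exact Hx].
  - intros y Hy. apply (is_derive_opp f), Hd, Hy.
  - intros y Hy Hfy. specialize (Hpos y Hy ltac:(lra)). lra.
Qed.

Lemma is_derive_of_quadratic_remainder (f : R -> R) x l d C : 0 < d ->
  (forall y, Rabs (y - x) <= d -> Rabs (f y - f x - l * (y - x)) <= C * (y - x) ^ 2) ->
  is_derive f x l.
Proof.
  intros Hd Hrem. apply is_derive_Reals. intros eps Heps.
  assert (HC : 0 <= C).
  { specialize (Hrem (x + d) ltac:(replace (x + d - x) with d by ring; rewrite Rabs_right; lra)).
    replace (x + d - x) with d in Hrem by ring.
    pose proof (Rabs_pos (f (x + d) - f x - l * d)). assert (0 < d ^ 2) by (apply pow_lt; lra).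
    nra. }
  assert (Hdelta : 0 < Rmin d (eps / (C + 1)))
    by (apply Rmin_pos; [| apply Rdiv_lt_0_compat]; lra).
  exists (mkposreal _ Hdelta). intros h Hh Hlt. simpl in Hlt.
  pose proof (Rmin_l d (eps / (C + 1))). pose proof (Rmin_r d (eps / (C + 1))).
  specialize (Hrem (x + h) ltac:(replace (x + h - x) with h by ring; lra)).
  replace (x + h - x) with h in Hrem by ring.
  replace ((f (x + h) - f x) / h - l) with ((f (x + h) - f x - l * h) / h) by (field; exact Hh).
  assert (Habs : 0 < Rabs h) by (apply Rabs_pos_lt, Hh).
  unfold Rdiv. rewrite Rabs_mult, Rabs_inv.
  apply Rle_lt_trans with (C * Rabs h).
  - rewrite <- pow2_abs in Hrem. apply (Rmult_le_reg_r (Rabs h)); [exact Habs |].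
    rewrite Rmult_assoc, Rinv_l by lra. nra.
  - assert (Rabs h * (C + 1) < eps).
    { apply Rlt_le_trans with (eps / (C + 1) * (C + 1)).
      - apply Rmult_lt_compat_r; lra.
      - right; field; lra. }
    nra.
Qed.

Lemma exp_le_compat x y : x <= y -> exp x <= exp y.
Proof. intros [Hlt | ->]; [left; apply exp_increasing, Hlt | lra]. Qed.

Lemma exp_mul_exp_opp x : exp x * exp (- x) = 1.
Proof. rewrite <- exp_plus, Rplus_opp_r. apply exp_0. Qed.

Lemma cosh_pos t : 0 < cosh t.
Proof. unfold cosh. pose proof (exp_pos t); pose proof (exp_pos (- t)). lra. Qed.

Lemma cosh_ge_1 t : 1 <= cosh t.
Proof.
  unfold cosh. pose proof (exp_ineq1_le t); pose proof (exp_ineq1_le (- t)).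
  pose proof (exp_pos t). pose proof (exp_mul_exp_opp t). nra.
Qed.

Lemma cosh_ge_quadratic t : 0 <= t -> 1 + t ^ 2 / 4 <= cosh t.
Proof.
  intros Ht. unfold cosh. pose proof (exp_ineq1_le (- t)).
  pose proof (exp_ge_taylor t 2 Ht) as Htaylor.
  simpl in Htaylor. unfold Factorial.fact in Htaylor; simpl in Htaylor. nra.
Qed.

Lemma cosh_le_exp_abs t : cosh t <= exp (Rabs t).
Proof.
  unfold cosh. destruct (Rle_dec 0 t).
  - rewrite Rabs_right by lra. pose proof (exp_le_compat (- t) t ltac:(lra)). lra.
  - rewrite Rabs_left by lra. pose proof (exp_le_compat t (- t) ltac:(lra)). lra.
Qed.

Lemma Rabs_sinh_le_cosh t : Rabs (sinh t) <= cosh t.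
Proof.
  unfold sinh, cosh. pose proof (exp_pos t); pose proof (exp_pos (- t)).
  apply Rabs_le; lra.
Qed.

Lemma sinh_sqr t : sinh t ^ 2 = cosh t ^ 2 - 1.
Proof. unfold sinh, cosh. pose proof (exp_mul_exp_opp t). nra. Qed.

Lemma exp_pow_INR t k : exp t ^ k = exp (INR k * t).
Proof.
  induction k as [| k IH].
  - simpl. rewrite Rmult_0_l, exp_0. reflexivity.
  - rewrite S_INR. simpl. rewrite IH, <- exp_plus. f_equal; ring.
Qed.

Lemma exp_sub_1_bound z : Rabs (exp z - 1) <= Rabs z * exp (Rabs z).
Proof.
  destruct (MVT_cor4 exp exp 0 (Rabs z)) with (b := z) as [c [Hc Hcz]].
  - intros c _. apply is_derive_exp.
  - rewrite Rminus_0_r; lra.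
  - rewrite exp_0, !Rminus_0_r in *. rewrite Hc, Rabs_mult, Rmult_comm.
    rewrite (Rabs_right (exp c)) by (left; apply exp_pos).
    apply Rmult_le_compat_l; [apply Rabs_pos |].
    apply exp_le_compat. pose proof (Rle_abs c). lra.
Qed.

Lemma exp_sub_1_sub_bound z : Rabs (exp z - 1 - z) <= z ^ 2 * exp (Rabs z).
Proof.
  destruct (MVT_cor4 (fun x => exp x - 1 - x) (fun x => exp x - 1) 0 (Rabs z))
    with (b := z) as [c [Hc Hcz]].
  - intros c _. auto_derive; [exact I | ring].
  - rewrite Rminus_0_r; lra.
  - rewrite exp_0, !Rminus_0_r in *. replace (exp z - 1 - z) with ((exp c - 1) * z) by lra.
    rewrite Rabs_mult, <- pow2_abs.
    pose proof (exp_sub_1_bound c).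
    pose proof (exp_le_compat (Rabs c) (Rabs z) Hcz).
    pose proof (Rabs_pos c); pose proof (Rabs_pos z); pose proof (exp_pos (Rabs c)).
    apply Rle_trans with (Rabs c * exp (Rabs c) * Rabs z); [apply Rmult_le_compat_r; assumption |].
    assert (Rabs c * exp (Rabs c) <= Rabs z * exp (Rabs z)) by (apply Rmult_le_compat; lra).
    nra.
Qed.

(** * Improper integrals over [a, +oo) *)

Lemma filter_prod_at_point_pinfty a (P : R -> R -> Prop) :
  (forall b, a < b -> P a b) ->
  filter_prod (at_point a) (Rbar_locally p_infty) (fun ab => P (fst ab) (snd ab)).
Proof.
  intros H. apply Filter_prod with (fun x => x = a) (fun b => a < b).
  - reflexivity.
  - exists a. tauto.
  - intros x y -> Hy. apply H, Hy.
Qed.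

Lemma is_RInt_gen_pinfty_lim (f : R -> R) a l :
  is_RInt_gen f (at_point a) (Rbar_locally p_infty) l ->
  filterlim (fun b => RInt f a b) (Rbar_locally p_infty) (locally l).
Proof.
  intros H P HP. destruct (H P HP) as [Q R HQ HR HQR].
  apply filter_imp with (2 := HR). intros b Rb.
  destruct (HQR a b HQ Rb) as [y [Hy Py]]. simpl in Hy.
  rewrite (is_RInt_unique _ _ _ _ Hy). exact Py.
Qed.

Lemma is_RInt_gen_pinfty_of_lim (f : R -> R) a l :
  (forall b, ex_RInt f a b) ->
  filterlim (fun b => RInt f a b) (Rbar_locally p_infty) (locally l) ->
  is_RInt_gen f (at_point a) (Rbar_locally p_infty) l.
Proof.
  intros Hex H P HP.
  apply Filter_prod with (fun x => x = a) (fun b => P (RInt f a b)).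
  - reflexivity.
  - apply H, HP.
  - intros x y -> Hy. exists (RInt f a y).
    split; [apply (RInt_correct (V := R_CompleteNormedModule)), Hex | exact Hy].
Qed.

Lemma ex_lim_pinfty_incr_bounded (I : R -> R) a M :
  (forall b b', a <= b -> b <= b' -> I b <= I b') -> (forall b, a <= b -> I b <= M) ->
  exists l, filterlim I (Rbar_locally p_infty) (locally l).
Proof.
  intros Hincr Hbnd.
  set (E := fun x => exists b, a <= b /\ x = I b).
  destruct (completeness E) as [l [Hub Hlub]].
  - exists M. intros x [b [Hb ->]]. apply Hbnd, Hb.
  - exists (I a). exists a. split; [lra | reflexivity].
  - exists l. apply filterlim_locally. intros [eps Heps]; simpl.
    assert (exists b0, a <= b0 /\ l - eps < I b0) as [b0 [Hb0 Hlt]].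
    { apply NNPP. intros Hno.
      assert (l <= l - eps); [| lra].
      apply Hlub. intros x [b [Hb ->]].
      apply Rnot_lt_le. intros Hlt. apply Hno. exists b. split; assumption. }
    exists b0. intros b Hb. apply Rabs_lt_between'.
    assert (I b0 <= I b) by (apply Hincr; lra).
    assert (I b <= l) by (apply Hub; exists b; split; [lra | reflexivity]).
    lra.
Qed.

Lemma ex_RInt_gen_exp_dominated (f : R -> R) a C :
  (forall t, continuous f t) -> (forall t, a <= t -> 0 <= f t <= C * exp (- t)) ->
  ex_RInt_gen f (at_point a) (Rbar_locally p_infty).
Proof.
  intros Hcont Hdom.
  assert (Hex : forall x y, ex_RInt f x y)
    by (intros; apply (ex_RInt_continuous (V := R_CompleteNormedModule)); auto).
  assert (Hexp : forall b, is_RInt (fun t => C * exp (- t)) a b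
                             (minus (- C * exp (- b)) (- C * exp (- a)))).
  { intros b. apply (is_RInt_derive (fun t => - C * exp (- t))).
    - intros x _. auto_derive; [exact I | ring].
    - intros x _. apply (ex_derive_continuous (V := R_NormedModule)). auto_derive. exact I. }
  assert (HC : 0 <= C).
  { pose proof (Hdom a (Rle_refl a)). pose proof (exp_pos (- a)). nra. }
  destruct (ex_lim_pinfty_incr_bounded (fun b => RInt f a b) a (C * exp (- a)))
    as [l Hl].
  - intros b b' Hb Hbb'. rewrite <- (RInt_Chasles f a b b') by apply Hex.
    assert (0 <= RInt f b b'); [| unfold plus; simpl; lra].
    apply RInt_ge_0; [exact Hbb' | apply Hex | intros x Hx; apply Hdom; lra].
  - intros b Hb.
    apply Rle_trans with (RInt (fun t => C * exp (- t)) a b).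
    + apply RInt_le; [exact Hb | apply Hex | eexists; apply Hexp |].
      intros x Hx. apply Hdom; lra.
    + rewrite (is_RInt_unique _ _ _ _ (Hexp b)).
      unfold minus, plus, opp; simpl. pose proof (exp_pos (- b)). nra.
  - exists l. apply is_RInt_gen_pinfty_of_lim; [apply Hex | exact Hl].
Qed.

Lemma is_RInt_gen_pinfty_ge_0 (f : R -> R) a l : (forall t, a <= t -> 0 <= f t) ->
  is_RInt_gen f (at_point a) (Rbar_locally p_infty) l -> 0 <= l.
Proof.
  intros Hf H.
  assert (Hnorm : norm l <= l).
  { apply (RInt_gen_norm (V := R_CompleteNormedModule) (Fa := at_point a)
             (Fb := Rbar_locally p_infty) f f l l); [| | exact H | exact H].
    - apply (filter_prod_at_point_pinfty a (fun x y => x <= y)). intros; lra.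
    - apply (filter_prod_at_point_pinfty a
               (fun x y => forall z, x <= z <= y -> norm (f z) <= f z)).
      intros b Hb z Hz. unfold norm; simpl; unfold abs; simpl.
      rewrite Rabs_right; [lra | apply Rle_ge, Hf; lra]. }
  unfold norm in Hnorm; simpl in Hnorm; unfold abs in Hnorm; simpl in Hnorm.
  pose proof (Rle_abs l). pose proof (Rabs_pos l). lra.
Qed.

Lemma lim_pinfty_exp_dominated (h : R -> R) D :
  (forall b, 0 <= b -> Rabs (h b) <= D * exp (- b)) ->
  filterlim h (Rbar_locally p_infty) (locally 0).
Proof.
  intros Hdom. apply filterlim_locally. intros [e He]; simpl.
  assert (HD : 0 <= D).
  { pose proof (Hdom 0 (Rle_refl 0)). pose proof (Rabs_pos (h 0)).
    pose proof (exp_pos (- 0)). nra. }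
  set (q := e / (D + 1)). assert (Hq : 0 < q) by (apply Rdiv_lt_0_compat; lra).
  exists (Rmax 0 (- ln q)). intros b Hb. change (Rabs (h b - 0) < e). rewrite Rminus_0_r.
  pose proof (Rmax_l 0 (- ln q)); pose proof (Rmax_r 0 (- ln q)).
  specialize (Hdom b ltac:(lra)).
  assert (exp (- b) < q) by (rewrite <- (exp_ln q Hq); apply exp_increasing; lra).
  assert (D * q < e).
  { apply Rlt_le_trans with ((D + 1) * q); [apply Rmult_lt_compat_r; lra |].
    right. unfold q. field. lra. }
  assert (D * exp (- b) <= D * q) by (apply Rmult_le_compat_l; lra).
  lra.
Qed.

(** * The integrals [K_nu^(k)] and Bessel's equation *)

Definition Kmom_integrand (nu : R) (k : nat) (u t : R) : R :=
  exp (- (u * cosh t)) * cosh (nu * t) * cosh t ^ k.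

(* [Kmom nu k u] is [(-1)^k] times the [k]-th derivative of [K_nu] at [u]. *)

Definition Kmom (nu : R) (k : nat) (u : R) : R :=
  RInt_gen (Kmom_integrand nu k u) (at_point 0) (Rbar_locally p_infty).

Lemma BesselK_Kmom nu : BesselK nu = Kmom nu 0.
Proof.
  apply functional_extensionality. intros u.
  unfold BesselK, Kmom, Kmom_integrand. f_equal.
  apply functional_extensionality. intros t. simpl. ring.
Qed.

Lemma Kmom_integrand_continuous nu k u t : continuous (Kmom_integrand nu k u) t.
Proof.
  apply (ex_derive_continuous (V := R_NormedModule)). unfold Kmom_integrand.
  auto_derive. exact I.
Qed.

Lemma Kmom_integrand_pos nu k u t : 0 < Kmom_integrand nu k u t.
Proof.
  unfold Kmom_integrand.
  apply Rmult_lt_0_compat; [apply Rmult_lt_0_compat |].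
  - apply exp_pos.
  - apply cosh_pos.
  - apply pow_lt, cosh_pos.
Qed.

(* [exp (- m t^2 / 4)] from [cosh t >= 1 + t^2/4] absorbs the growth
   [exp ((k + |nu|) t)] of the other factors, up to the constant. *)
Lemma Kmom_integrand_bound nu k u m t : 0 < m -> m <= u -> 0 <= t ->
  Kmom_integrand nu k u t <= exp ((INR k + Rabs nu + 1) ^ 2 / m) * exp (- t).
Proof.
  intros Hm Hmu Ht. unfold Kmom_integrand.
  set (al := INR k + Rabs nu + 1).
  assert (Hgauss : exp (- (u * cosh t)) <= exp (- (m * (t ^ 2 / 4)))).
  { apply exp_le_compat. pose proof (cosh_ge_quadratic t Ht). pose proof (cosh_ge_1 t). nra. }
  assert (Hcosh_nu : cosh (nu * t) <= exp (Rabs nu * t)).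
  { rewrite <- (Rabs_right t) at 2 by lra. rewrite <- Rabs_mult. apply cosh_le_exp_abs. }
  assert (Hpow : cosh t ^ k <= exp (INR k * t)).
  { rewrite <- exp_pow_INR. apply pow_incr. split; [left; apply cosh_pos |].
    pose proof (cosh_le_exp_abs t) as Hcosh. rewrite Rabs_right in Hcosh; lra. }
  apply Rle_trans with (exp (- (m * (t ^ 2 / 4))) * exp (Rabs nu * t) * exp (INR k * t)).
  { pose proof (exp_pos (- (u * cosh t))); pose proof (cosh_pos (nu * t)).
    apply Rmult_le_compat; [nra | left; apply pow_lt, cosh_pos | | exact Hpow].
    apply Rmult_le_compat;
      [left; apply exp_pos | left; apply cosh_pos | exact Hgauss | exact Hcosh_nu]. }
  rewrite <- !exp_plus. apply exp_le_compat.
  assert (Hsq : 0 <= (m * t / 2 - al) ^ 2 / m)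
    by (apply Rdiv_le_0_compat; [apply pow2_ge_0 | lra]).
  replace ((m * t / 2 - al) ^ 2 / m) with (al ^ 2 / m - al * t + m * t ^ 2 / 4)
    in Hsq by (field; lra).
  unfold al in *. lra.
Qed.

Lemma ex_RInt_gen_Kmom_integrand nu k u a : 0 < u -> 0 <= a ->
  ex_RInt_gen (Kmom_integrand nu k u) (at_point a) (Rbar_locally p_infty).
Proof.
  intros Hu Ha.
  apply (ex_RInt_gen_exp_dominated _ a (exp ((INR k + Rabs nu + 1) ^ 2 / u))).
  - apply Kmom_integrand_continuous.
  - intros t Ht. split; [left; apply Kmom_integrand_pos | apply Kmom_integrand_bound; lra].
Qed.

Lemma is_RInt_gen_Kmom nu k u : 0 < u ->
  is_RInt_gen (Kmom_integrand nu k u) (at_point 0) (Rbar_locally p_infty) (Kmom nu k u).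
Proof.
  intros Hu. apply (RInt_gen_correct (V := R_CompleteNormedModule)).
  apply ex_RInt_gen_Kmom_integrand; lra.
Qed.

Lemma Kmom_pos nu k u : 0 < u -> 0 < Kmom nu k u.
Proof.
  intros Hu.
  destruct (ex_RInt_gen_Kmom_integrand nu k u 1 Hu ltac:(lra)) as [l Hl].
  assert (H01 : is_RInt_gen (Kmom_integrand nu k u) (at_point 0) (at_point 1)
                            (RInt (Kmom_integrand nu k u) 0 1)).
  { apply is_RInt_gen_at_point, (RInt_correct (V := R_CompleteNormedModule)).
    apply (ex_RInt_continuous (V := R_CompleteNormedModule)).
    intros; apply Kmom_integrand_continuous. }
  unfold Kmom.
  rewrite (is_RInt_gen_unique (V := R_CompleteNormedModule) _ _
             (is_RInt_gen_Chasles _ _ _ _ H01 Hl)).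
  assert (0 < RInt (Kmom_integrand nu k u) 0 1).
  { apply RInt_gt_0; [lra | intros; apply Kmom_integrand_pos |].
    intros; apply Kmom_integrand_continuous. }
  assert (0 <= l).
  { apply (is_RInt_gen_pinfty_ge_0 (Kmom_integrand nu k u) 1); [| exact Hl].
    intros; left; apply Kmom_integrand_pos. }
  unfold plus; simpl. lra.
Qed.

Lemma Kmom_integrand_taylor nu k u0 u t : 0 < u0 -> Rabs (u - u0) <= u0 / 2 ->
  Rabs (Kmom_integrand nu k u t - Kmom_integrand nu k u0 t
        + (u - u0) * Kmom_integrand nu (S k) u0 t)
  <= (u - u0) ^ 2 * Kmom_integrand nu (S (S k)) (u0 / 2) t.
Proof.
  intros Hu0 Hu. unfold Kmom_integrand.
  change (cosh t ^ S k) with (cosh t * cosh t ^ k).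
  change (cosh t ^ S (S k)) with (cosh t * (cosh t * cosh t ^ k)).
  set (c := cosh t). set (W := cosh (nu * t) * c ^ k).
  assert (Hc : 1 <= c) by apply cosh_ge_1.
  assert (HW : 0 < W) by (apply Rmult_lt_0_compat; [apply cosh_pos | apply pow_lt; lra]).
  set (z := - ((u - u0) * c)).
  replace (exp (- (u * c)) * cosh (nu * t) * c ^ k - exp (- (u0 * c)) * cosh (nu * t) * c ^ k
           + (u - u0) * (exp (- (u0 * c)) * cosh (nu * t) * (c * c ^ k)))
    with (W * exp (- (u0 * c)) * (exp z - 1 - z))
    by (replace (- (u * c)) with (- (u0 * c) + z) by (unfold z; ring);
        rewrite exp_plus; unfold W, z; ring).
  rewrite Rabs_mult, Rabs_mult, (Rabs_right W), (Rabs_right (exp _))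
    by (left; try apply exp_pos; exact HW).
  assert (Hz : Rabs z <= u0 / 2 * c).
  { unfold z. rewrite Rabs_Ropp, Rabs_mult, (Rabs_right c) by lra.
    apply Rmult_le_compat_r; lra. }
  assert (Hexp : exp (- (u0 * c)) * exp (Rabs z) <= exp (- (u0 / 2 * c)))
    by (rewrite <- exp_plus; apply exp_le_compat; lra).
  pose proof (exp_sub_1_sub_bound z) as Htaylor.
  pose proof (exp_pos (- (u0 * c))). pose proof (exp_pos (Rabs z)).
  apply Rle_trans with (W * z ^ 2 * (exp (- (u0 * c)) * exp (Rabs z))).
  { replace (W * z ^ 2 * (exp (- (u0 * c)) * exp (Rabs z)))
      with (W * exp (- (u0 * c)) * (z ^ 2 * exp (Rabs z))) by ring.
    apply Rmult_le_compat_l; [nra | exact Htaylor]. }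
  replace (z ^ 2) with ((u - u0) ^ 2 * c ^ 2) by (unfold z; ring).
  replace ((u - u0) ^ 2 * (exp (- (u0 / 2 * c)) * cosh (nu * t) * (c * (c * c ^ k))))
    with (W * ((u - u0) ^ 2 * c ^ 2) * exp (- (u0 / 2 * c))) by (unfold W; ring).
  apply Rmult_le_compat_l; [| exact Hexp].
  apply Rmult_le_pos; [lra | apply Rmult_le_pos; apply pow2_ge_0].
Qed.

Lemma is_derive_Kmom nu k u0 : 0 < u0 -> is_derive (Kmom nu k) u0 (- Kmom nu (S k) u0).
Proof.
  intros Hu0.
  apply (is_derive_of_quadratic_remainder _ _ _ (u0 / 2) (Kmom nu (S (S k)) (u0 / 2)));
    [lra |].
  intros u Hu. pose proof Hu as Hu'. apply Rabs_le_between' in Hu'.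
  set (g := fun t => Kmom_integrand nu k u t + (-1) * Kmom_integrand nu k u0 t
                     + (u - u0) * Kmom_integrand nu (S k) u0 t).
  assert (Hg : is_RInt_gen g (at_point 0) (Rbar_locally p_infty)
                 (Kmom nu k u + (-1) * Kmom nu k u0 + (u - u0) * Kmom nu (S k) u0)).
  { apply (is_RInt_gen_plus (fun t => Kmom_integrand nu k u t + (-1) * Kmom_integrand nu k u0 t)
                            (fun t => (u - u0) * Kmom_integrand nu (S k) u0 t)).
    - apply (is_RInt_gen_plus (Kmom_integrand nu k u)
               (fun t => (-1) * Kmom_integrand nu k u0 t)).
      + apply is_RInt_gen_Kmom; lra.
      + apply (is_RInt_gen_scal (Kmom_integrand nu k u0)), is_RInt_gen_Kmom; lra.
    - apply (is_RInt_gen_scal (Kmom_integrand nu (S k) u0)), is_RInt_gen_Kmom; lra. }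
  assert (Hdom : is_RInt_gen (fun t => (u - u0) ^ 2 * Kmom_integrand nu (S (S k)) (u0 / 2) t)
                   (at_point 0) (Rbar_locally p_infty)
                   ((u - u0) ^ 2 * Kmom nu (S (S k)) (u0 / 2))).
  { apply (is_RInt_gen_scal (Kmom_integrand nu (S (S k)) (u0 / 2))), is_RInt_gen_Kmom; lra. }
  replace (Kmom nu k u - Kmom nu k u0 - - Kmom nu (S k) u0 * (u - u0))
    with (Kmom nu k u + (-1) * Kmom nu k u0 + (u - u0) * Kmom nu (S k) u0) by ring.
  rewrite (Rmult_comm (Kmom nu (S (S k)) (u0 / 2))).
  change (Rabs ?x) with (norm x).
  apply (RInt_gen_norm (V := R_CompleteNormedModule) (Fa := at_point 0)
           (Fb := Rbar_locally p_infty) g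
           (fun t => (u - u0) ^ 2 * Kmom_integrand nu (S (S k)) (u0 / 2) t) _ _);
    [| | exact Hg | exact Hdom].
  - apply (filter_prod_at_point_pinfty 0 (fun x y => x <= y)). intros; lra.
  - apply (filter_prod_at_point_pinfty 0 (fun x y => forall z, x <= z <= y ->
      norm (g z) <= (u - u0) ^ 2 * Kmom_integrand nu (S (S k)) (u0 / 2) z)).
    intros b Hb z Hz. unfold g, norm; simpl; unfold abs; simpl.
    replace (Kmom_integrand nu k u z + -1 * Kmom_integrand nu k u0 z)
      with (Kmom_integrand nu k u z - Kmom_integrand nu k u0 z) by ring.
    apply Kmom_integrand_taylor; assumption.
Qed.

(* [- bessel_boundary nu u] is a primitive of
   [t |-> (u^2 sinh^2 t - u cosh t - nu^2) e^{-u cosh t} cosh (nu t)], whose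
   integral over [0, +oo) is [u^2 K'' + u K' - (u^2 + nu^2) K]. *)
Definition bessel_boundary (nu u t : R) : R :=
  exp (- (u * cosh t)) * (u * sinh t * cosh (nu * t) + nu * sinh (nu * t)).

Lemma bessel_boundary_bound nu u b : 0 < u -> 0 <= b ->
  Rabs (bessel_boundary nu u b)
  <= (u + Rabs nu) * exp ((1 + Rabs nu + 1) ^ 2 / u) * exp (- b).
Proof.
  intros Hu Hb. unfold bessel_boundary.
  pose proof (Kmom_integrand_bound nu 1 u u b Hu (Rle_refl u) Hb) as HF.
  unfold Kmom_integrand in HF. rewrite pow_1 in HF. simpl INR in HF.
  pose proof (Rabs_sinh_le_cosh b). pose proof (Rabs_sinh_le_cosh (nu * b)).
  pose proof (cosh_ge_1 b). pose proof (cosh_pos (nu * b)). pose proof (Rabs_pos nu).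
  pose proof (Rabs_pos (sinh b)). pose proof (Rabs_pos (sinh (nu * b))).
  pose proof (exp_pos (- (u * cosh b))).
  assert (Habs : Rabs (u * sinh b * cosh (nu * b) + nu * sinh (nu * b))
                 <= (u + Rabs nu) * (cosh b * cosh (nu * b))).
  { eapply Rle_trans; [apply Rabs_triang |].
    rewrite !Rabs_mult, (Rabs_right u), (Rabs_right (cosh (nu * b))) by lra.
    assert (u * Rabs (sinh b) * cosh (nu * b) <= u * cosh b * cosh (nu * b)).
    { apply Rmult_le_compat_r; [lra | apply Rmult_le_compat_l; lra]. }
    assert (Rabs nu * Rabs (sinh (nu * b)) <= Rabs nu * (cosh b * cosh (nu * b)))
      by (apply Rmult_le_compat_l; nra).
    nra. }
  rewrite Rabs_mult, (Rabs_right (exp _)) by lra.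
  apply Rle_trans with ((u + Rabs nu) * (exp (- (u * cosh b)) * cosh (nu * b) * cosh b)).
  - replace ((u + Rabs nu) * (exp (- (u * cosh b)) * cosh (nu * b) * cosh b))
      with (exp (- (u * cosh b)) * ((u + Rabs nu) * (cosh b * cosh (nu * b)))) by ring.
    apply Rmult_le_compat_l; lra.
  - rewrite (Rmult_assoc (u + Rabs nu)). apply Rmult_le_compat_l; lra.
Qed.

Lemma Kmom_bessel_ode nu u : 0 < u ->
  u ^ 2 * Kmom nu 2 u = u * Kmom nu 1 u + (u ^ 2 + nu ^ 2) * Kmom nu 0 u.
Proof.
  intros Hu.
  set (G := fun t => (u ^ 2 * sinh t ^ 2 - u * cosh t - nu ^ 2)
                     * (exp (- (u * cosh t)) * cosh (nu * t))).
  set (L := u ^ 2 * Kmom nu 2 u + (- u ^ 2) * Kmom nu 0 u + (- u) * Kmom nu 1 u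
            + (- nu ^ 2) * Kmom nu 0 u).
  assert (HG : is_RInt_gen G (at_point 0) (Rbar_locally p_infty) L).
  { replace G with (fun t => u ^ 2 * Kmom_integrand nu 2 u t
                             + (- u ^ 2) * Kmom_integrand nu 0 u t
                             + (- u) * Kmom_integrand nu 1 u t
                             + (- nu ^ 2) * Kmom_integrand nu 0 u t).
    2:{ apply functional_extensionality. intros t.
        unfold G, Kmom_integrand. rewrite sinh_sqr. ring. }
    assert (Hscal : forall c k, is_RInt_gen (fun t => c * Kmom_integrand nu k u t)
                                  (at_point 0) (Rbar_locally p_infty) (c * Kmom nu k u))
      by (intros c k; apply (is_RInt_gen_scal (Kmom_integrand nu k u)), is_RInt_gen_Kmom, Hu).
    apply (is_RInt_gen_plus (fun t => _ + _ + _) (fun t => _ * _)); [| apply Hscal].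
    apply (is_RInt_gen_plus (fun t => _ + _) (fun t => _ * _)); [| apply Hscal].
    apply (is_RInt_gen_plus (fun t => _ * _) (fun t => _ * _)); apply Hscal. }
  assert (Hpartial : forall b, RInt G 0 b = - bessel_boundary nu u b).
  { intros b. apply is_RInt_unique.
    assert (Hzero : bessel_boundary nu u 0 = 0)
      by (unfold bessel_boundary; rewrite Rmult_0_r, sinh_0; ring).
    replace (- bessel_boundary nu u b)
      with (minus (- bessel_boundary nu u b) (- bessel_boundary nu u 0))
      by (rewrite Hzero; unfold minus, plus, opp; simpl; ring).
    apply (is_RInt_derive (fun t => - bessel_boundary nu u t)).
    - intros x _. unfold bessel_boundary, G. auto_derive; [exact I | ring].
    - intros x _. apply (ex_derive_continuous (V := R_NormedModule)). unfold G.
      auto_derive. exact I. }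
  assert (Hlim : filterlim (fun b => RInt G 0 b) (Rbar_locally p_infty) (locally 0)).
  { apply (filterlim_ext (fun b => - bessel_boundary nu u b));
      [intros b; symmetry; apply Hpartial |].
    apply (lim_pinfty_exp_dominated _ ((u + Rabs nu) * exp ((1 + Rabs nu + 1) ^ 2 / u))).
    intros b Hb. rewrite Rabs_Ropp. apply bessel_boundary_bound; assumption. }
  assert (HL : L = 0).
  { exact (@filterlim_locally_unique R R_AbsRing R_NormedModule _
             (Proper_StrongProper _ (Rbar_locally_filter p_infty)) _ L 0
             (is_RInt_gen_pinfty_lim G 0 L HG) Hlim). }
  unfold L in HL. lra.
Qed.

Lemma BesselK_pos nu u : 0 < u -> 0 < BesselK nu u.
Proof. rewrite BesselK_Kmom. apply Kmom_pos. Qed.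

Lemma dBesselK_Kmom nu u : 0 < u -> dBesselK nu u = - Kmom nu 1 u.
Proof.
  intros Hu. unfold dBesselK. rewrite BesselK_Kmom.
  apply is_derive_unique, is_derive_Kmom, Hu.
Qed.

Lemma dBesselK_neg nu u : 0 < u -> dBesselK nu u < 0.
Proof. intros Hu. rewrite dBesselK_Kmom by exact Hu. pose proof (Kmom_pos nu 1 u Hu). lra. Qed.

Lemma is_derive_BesselK nu u : 0 < u -> is_derive (BesselK nu) u (dBesselK nu u).
Proof.
  intros Hu. rewrite dBesselK_Kmom, BesselK_Kmom by exact Hu. apply is_derive_Kmom, Hu.
Qed.

Lemma is_derive_dBesselK nu u : 0 < u ->
  is_derive (dBesselK nu) u (((u ^ 2 + nu ^ 2) * BesselK nu u - u * dBesselK nu u) / u ^ 2).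
Proof.
  intros Hu.
  apply (is_derive_ext_loc (fun v => - Kmom nu 1 v)).
  - apply (locally_interval _ u 0 p_infty); [exact Hu | exact I |].
    intros v Hv _. symmetry. apply dBesselK_Kmom, Hv.
  - replace (((u ^ 2 + nu ^ 2) * BesselK nu u - u * dBesselK nu u) / u ^ 2)
      with (- - Kmom nu 2 u).
    + apply (is_derive_opp (Kmom nu 1)), is_derive_Kmom, Hu.
    + rewrite dBesselK_Kmom, BesselK_Kmom by exact Hu.
      apply (Rmult_eq_reg_l (u ^ 2)); [| apply pow_nonzero; lra].
      rewrite Ropp_involutive, Kmom_bessel_ode by exact Hu. field. lra.
Qed.

Lemma ex_derive_BesselK nu u : 0 < u -> ex_derive (BesselK nu) u.
Proof. intros Hu. eexists. apply is_derive_BesselK, Hu. Qed.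

Lemma ex_derive_dBesselK nu u : 0 < u -> ex_derive (dBesselK nu) u.
Proof. intros Hu. eexists. apply is_derive_dBesselK, Hu. Qed.

Lemma Derive_dBesselK nu u : 0 < u ->
  Derive (dBesselK nu) u = ((u ^ 2 + nu ^ 2) * BesselK nu u - u * dBesselK nu u) / u ^ 2.
Proof. intros Hu. apply is_derive_unique, is_derive_dBesselK, Hu. Qed.

(** * The Riccati ratio [- u K' / K] *)

Definition Kratio (nu u : R) : R := - u * dBesselK nu u / BesselK nu u.

Lemma Kratio_pos nu u : 0 < u -> 0 < Kratio nu u.
Proof.
  intros Hu. pose proof (BesselK_pos nu u Hu). pose proof (dBesselK_neg nu u Hu).
  apply Rdiv_lt_0_compat; nra.
Qed.

Lemma dBesselK_Kratio nu u : 0 < u -> dBesselK nu u = - Kratio nu u * BesselK nu u / u.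
Proof.
  intros Hu. pose proof (BesselK_pos nu u Hu). unfold Kratio. field. lra.
Qed.

Lemma is_derive_Kratio nu u : 0 < u ->
  is_derive (Kratio nu) u ((Kratio nu u ^ 2 - (u ^ 2 + nu ^ 2)) / u).
Proof.
  intros Hu. pose proof (BesselK_pos nu u Hu). unfold Kratio.
  auto_derive.
  - repeat split; [apply ex_derive_dBesselK, Hu | apply ex_derive_BesselK, Hu | lra].
  - rewrite Derive_dBesselK by exact Hu.
    change (Derive (fun x => BesselK nu x) u) with (dBesselK nu u).
    field. lra.
Qed.

Lemma is_derive_sqrt_sum_sq nu x : 0 < x ->
  is_derive (fun x => sqrt (x ^ 2 + nu ^ 2)) x (x / sqrt (x ^ 2 + nu ^ 2)).
Proof.
  intros Hx. assert (Hpos : 0 < x ^ 2 + nu ^ 2) by nra.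
  pose proof (sqrt_lt_R0 _ Hpos).
  auto_derive; [lra |].
  replace (x * (x * 1) + nu * (nu * 1)) with (x ^ 2 + nu ^ 2) by ring. field. lra.
Qed.

(* Below [sqrt (u^2 + nu^2)] the Riccati equation forces [Kratio] to decrease
   with slope eventually below [-1], so it would become negative. *)
Lemma Kratio_ge_sqrt nu u : 0 < u -> sqrt (u ^ 2 + nu ^ 2) <= Kratio nu u.
Proof.
  intros Hu. apply Rnot_lt_le. intros Hlt.
  set (c := sqrt (u ^ 2 + nu ^ 2)) in Hlt.
  assert (Hc : 0 <= c) by apply sqrt_pos.
  set (dp := fun x => (Kratio nu x ^ 2 - (x ^ 2 + nu ^ 2)) / x).
  assert (Hd : forall x, u <= x -> is_derive (Kratio nu) x (dp x))
    by (intros x Hx; apply is_derive_Kratio; lra).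
  assert (Hslope : forall x, u <= x -> Kratio nu x < c -> dp x <= (c ^ 2 - x ^ 2) / x).
  { intros x Hx Hpx. pose proof (Kratio_pos nu x ltac:(lra)).
    unfold dp, Rdiv. apply Rmult_le_compat_r; [left; apply Rinv_0_lt_compat; lra | nra]. }
  assert (Hbelow : forall x, u <= x -> Kratio nu x < c).
  { apply (stays_below _ dp u c Hd Hlt). intros x Hx Hpx.
    assert (c ^ 2 <= x ^ 2 + nu ^ 2).
    { unfold c. rewrite pow2_sqrt by nra. nra. }
    pose proof (Kratio_pos nu x ltac:(lra)).
    unfold dp, Rdiv. apply Rmult_le_0_r; [nra | left; apply Rinv_0_lt_compat; lra]. }
  set (U := u + c + 1).
  destruct (MVT_is_derive (Kratio nu) dp U (U + c + 1)) as [xi [Hxi Heq]];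
    [lra | intros; apply Hd; unfold U in *; lra |].
  assert (Hsteep : dp xi <= -1).
  { apply Rle_trans with ((c ^ 2 - xi ^ 2) / xi);
      [apply Hslope, Hbelow; unfold U in *; lra |].
    apply (Rmult_le_reg_r xi); [unfold U in *; lra |].
    unfold Rdiv. rewrite Rmult_assoc, Rinv_l by (unfold U in *; lra).
    assert ((c + 1) * c <= xi * (xi - 1)) by (apply Rmult_le_compat; unfold U in *; lra).
    nra. }
  pose proof (Kratio_pos nu (U + c + 1) ltac:(unfold U; lra)).
  pose proof (Hbelow U ltac:(unfold U; lra)).
  replace (U + c + 1 - U) with (c + 1) in Heq by ring.
  nra.
Qed.

Lemma Kratio_gt_sqrt nu u : 0 < u -> sqrt (u ^ 2 + nu ^ 2) < Kratio nu u.
Proof.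
  intros Hu. destruct (Kratio_ge_sqrt nu u Hu) as [| Heq]; [assumption | exfalso].
  assert (Hpos : 0 < u ^ 2 + nu ^ 2) by nra.
  pose proof (sqrt_lt_R0 _ Hpos).
  pose proof (is_derive_eq_at_contact _ _ _ _ 0 u Hu (Kratio_ge_sqrt nu) Heq
                (is_derive_sqrt_sum_sq nu u Hu) (is_derive_Kratio nu u Hu)) as Hslopes.
  rewrite <- Heq, pow2_sqrt in Hslopes by lra.
  replace ((u ^ 2 + nu ^ 2 - (u ^ 2 + nu ^ 2)) / u) with 0 in Hslopes by (field; lra).
  assert (0 < u / sqrt (u ^ 2 + nu ^ 2)) by (apply Rdiv_lt_0_compat; lra).
  lra.
Qed.

(* [1/g + ln] is nonincreasing, so [1/g] would become negative. *)
Lemma riccati_blow_up (g dg : R -> R) u0 : 0 < u0 ->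
  (forall x, u0 <= x -> is_derive g x (dg x)) -> (forall x, u0 <= x -> 0 < g x) ->
  (forall x, u0 <= x -> g x ^ 2 / x <= dg x) -> False.
Proof.
  intros Hu0 Hd Hpos Hgrow.
  set (phi := fun x => / g x + ln x).
  set (dphi := fun x => - dg x / g x ^ 2 + / x).
  assert (Hdphi : forall x, u0 <= x -> is_derive phi x (dphi x)).
  { intros x Hx. pose proof (Hpos x Hx).
    apply (is_derive_plus (fun x => / g x) ln).
    - apply (is_derive_inv g); [apply Hd | ]; lra.
    - apply is_derive_ln. lra. }
  assert (Hdphi_nonpos : forall x, u0 <= x -> dphi x <= 0).
  { intros x Hx. pose proof (Hpos x Hx). pose proof (Hgrow x Hx).
    assert (Hg2 : 0 < g x ^ 2) by (apply pow_lt; lra).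
    assert (/ x <= dg x / g x ^ 2); [| unfold dphi, Rdiv in *; lra].
    replace (/ x) with (g x ^ 2 / x / g x ^ 2) by (field; split; lra).
    unfold Rdiv at 1 3. apply Rmult_le_compat_r; [left; apply Rinv_0_lt_compat |]; lra. }
  pose proof (Hpos u0 (Rle_refl u0)) as Hg0.
  set (U := u0 * exp (/ g u0 + 1)).
  assert (HU : u0 < U).
  { assert (1 < exp (/ g u0 + 1)).
    { rewrite <- exp_0 at 1. apply exp_increasing. pose proof (Rinv_0_lt_compat _ Hg0). lra. }
    unfold U. nra. }
  assert (Hmono : phi U <= phi u0).
  { apply (derive_nonpos_le phi dphi); [lra | intros; apply Hdphi; lra |].
    intros; apply Hdphi_nonpos; lra. }
  unfold phi, U in Hmono. rewrite ln_mult, ln_exp in Hmono by (try apply exp_pos; lra).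
  pose proof (Rinv_0_lt_compat _ (Hpos U ltac:(lra))). unfold U in *. lra.
Qed.

(* Comparison from above: if [Kratio - s] were positive somewhere, it would
   satisfy [g' >= g^2/u] from then on and blow up. *)
Lemma Kratio_le_of_riccati_subsolution nu a (s ds : R -> R) : 0 <= a ->
  (forall x, a < x -> is_derive s x (ds x)) -> (forall x, a < x -> 0 <= s x) ->
  (forall x, a < x -> ds x < (s x ^ 2 - (x ^ 2 + nu ^ 2)) / x) ->
  forall u, a < u -> Kratio nu u <= s u.
Proof.
  intros Ha Hs Hs0 Hsub u0 Hu0. apply Rnot_lt_le. intros Hlt.
  set (g := fun x => Kratio nu x - s x).
  set (dg := fun x => (Kratio nu x ^ 2 - (x ^ 2 + nu ^ 2)) / x - ds x).
  assert (Hdg : forall x, u0 <= x -> is_derive g x (dg x)).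
  { intros x Hx. apply (is_derive_minus (Kratio nu) s);
      [apply is_derive_Kratio | apply Hs]; lra. }
  assert (Hgrow : forall x, u0 <= x -> 0 < g x -> g x ^ 2 / x <= dg x).
  { intros x Hx Hgx. specialize (Hsub x ltac:(lra)). specialize (Hs0 x ltac:(lra)).
    unfold g, dg in *.
    assert (Hsq : (Kratio nu x - s x) ^ 2 / x <= (Kratio nu x ^ 2 - s x ^ 2) / x).
    { unfold Rdiv. apply Rmult_le_compat_r; [left; apply Rinv_0_lt_compat; lra | nra]. }
    replace ((Kratio nu x ^ 2 - s x ^ 2) / x)
      with ((Kratio nu x ^ 2 - (x ^ 2 + nu ^ 2)) / x - (s x ^ 2 - (x ^ 2 + nu ^ 2)) / x)
      in Hsq by (field; lra).
    lra. }
  assert (Hpos : forall x, u0 <= x -> 0 < g x).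
  { apply (stays_above g dg u0 0 Hdg); [unfold g; lra |].
    intros x Hx Hgx. pose proof (Hgrow x Hx Hgx).
    assert (0 <= g x ^ 2 / x) by (apply Rdiv_le_0_compat; [apply pow2_ge_0 | lra]).
    lra. }
  apply (riccati_blow_up g dg u0); [lra | exact Hdg | exact Hpos |].
  intros x Hx. apply Hgrow, Hpos; exact Hx.
Qed.

Lemma Kratio_lt_of_riccati_subsolution nu a (s ds : R -> R) : 0 <= a ->
  (forall x, a < x -> is_derive s x (ds x)) -> (forall x, a < x -> 0 <= s x) ->
  (forall x, a < x -> ds x < (s x ^ 2 - (x ^ 2 + nu ^ 2)) / x) ->
  forall u, a < u -> Kratio nu u < s u.
Proof.
  intros Ha Hs Hs0 Hsub u Hu.
  pose proof (Kratio_le_of_riccati_subsolution nu a s ds Ha Hs Hs0 Hsub) as Hle.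
  destruct (Hle u Hu) as [| Heq]; [assumption | exfalso].
  pose proof (is_derive_eq_at_contact _ _ _ _ a u Hu Hle Heq
                (is_derive_Kratio nu u ltac:(lra)) (Hs u Hu)) as Hslopes.
  specialize (Hsub u Hu). rewrite <- Heq, <- Hslopes in Hsub. lra.
Qed.

Lemma Kratio_sqr_gt nu u : 0 < u -> u ^ 2 + nu ^ 2 < Kratio nu u ^ 2.
Proof.
  intros Hu. pose proof (Kratio_gt_sqrt nu u Hu).
  assert (Hpos : 0 < u ^ 2 + nu ^ 2) by nra.
  pose proof (sqrt_lt_R0 _ Hpos). pose proof (pow2_sqrt (u ^ 2 + nu ^ 2) ltac:(lra)).
  nra.
Qed.

(* [s = 1/2 + sqrt (1/4 + u^2 + nu^2)] is the positive root of [s^2 - s = u^2 + nu^2]. *)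
Lemma Kratio_sqr_sub_lt nu u : 0 < u -> Kratio nu u ^ 2 - Kratio nu u < u ^ 2 + nu ^ 2.
Proof.
  intros Hu.
  set (S := fun x => sqrt (1 / 4 + (x ^ 2 + nu ^ 2))).
  assert (HS : forall x, 0 < 1 / 4 + (x ^ 2 + nu ^ 2)) by (intros; nra).
  assert (HSpos : forall x, 0 < S x) by (intros; apply sqrt_lt_R0, HS).
  assert (HS2 : forall x, S x ^ 2 = 1 / 4 + (x ^ 2 + nu ^ 2))
    by (intros; apply pow2_sqrt; left; apply HS).
  assert (Hcmp : forall u, 0 < u -> Kratio nu u < 1 / 2 + S u).
  { apply (Kratio_lt_of_riccati_subsolution nu 0 _ (fun x => x / S x)); [lra | | |].
    - intros x Hx. specialize (HS x). specialize (HSpos x). unfold S in *.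
      auto_derive; [lra |].
      replace (x * (x * 1) + nu * (nu * 1)) with (x ^ 2 + nu ^ 2) by ring. field. lra.
    - intros x Hx. specialize (HSpos x). lra.
    - intros x Hx. specialize (HSpos x). specialize (HS2 x).
      replace ((1 / 2 + S x) ^ 2 - (x ^ 2 + nu ^ 2)) with (1 / 2 + S x) by nra.
      assert (x < S x) by nra.
      assert (x / S x < 1).
      { apply (Rmult_lt_reg_r (S x)); [lra |]. unfold Rdiv.
        rewrite Rmult_assoc, Rinv_l by lra. lra. }
      assert (1 < (1 / 2 + S x) / x); [| lra].
      apply (Rmult_lt_reg_r x); [lra |]. unfold Rdiv.
      rewrite Rmult_assoc, Rinv_l by lra. lra. }
  specialize (Hcmp u Hu). pose proof (HSpos u). pose proof (HS2 u).
  pose proof (Kratio_pos nu u Hu).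
  assert (1 / 2 < S u) by nra.
  nra.
Qed.

Lemma Kratio_lt_sum_sq nu a : 0 <= a ->
  (forall x, a < x -> 2 * x ^ 2 < (x ^ 2 + nu ^ 2) ^ 2 - (x ^ 2 + nu ^ 2)) ->
  forall u, a < u -> Kratio nu u < u ^ 2 + nu ^ 2.
Proof.
  intros Ha Hcond. apply (Kratio_lt_of_riccati_subsolution nu a _ (fun x => 2 * x) Ha).
  - intros x Hx. auto_derive; [exact I | ring].
  - intros x Hx. nra.
  - intros x Hx. specialize (Hcond x Hx).
    apply (Rmult_lt_reg_r x); [lra |].
    replace (((x ^ 2 + nu ^ 2) ^ 2 - (x ^ 2 + nu ^ 2)) / x * x)
      with ((x ^ 2 + nu ^ 2) ^ 2 - (x ^ 2 + nu ^ 2)) by (field; lra).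
    lra.
Qed.

(** * Monotonicity *)

(* Differentiates an expression in [u], [BesselK nu u] and [dBesselK nu u],
   and expresses the result through [Kratio nu u]. *)
Ltac derive_via_Kratio nu Hu :=
  let HK := fresh "HK" in
  pose proof (BesselK_pos nu _ Hu) as HK;
  auto_derive;
  [ repeat split;
    match goal with
    | |- ex_derive (fun x => BesselK nu x) _ => apply ex_derive_BesselK, Hu
    | |- ex_derive (fun x => dBesselK nu x) _ => apply ex_derive_dBesselK, Hu
    | |- True => exact I
    | |- _ <> 0 => intro; nra
    end
  | change (Derive (fun x => BesselK nu x) ?u) with (dBesselK nu u);
    change (Derive (fun x => dBesselK nu x) ?u) with (Derive (dBesselK nu) u);
    rewrite ?(Derive_dBesselK nu _ Hu), (dBesselK_Kratio nu _ Hu);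
    field; repeat split; intro; nra ].

Lemma is_derive_dBesselK_div_sqr nu u : 0 < u ->
  is_derive (fun u => dBesselK nu u / BesselK nu u ^ 2) u
    ((u ^ 2 + nu ^ 2 + Kratio nu u - 2 * Kratio nu u ^ 2) / (u ^ 2 * BesselK nu u)).
Proof. intros Hu. derive_via_Kratio nu Hu. Qed.

Lemma is_derive_dBesselK_div nu u : 0 < u ->
  is_derive (fun u => dBesselK nu u / BesselK nu u) u
    ((u ^ 2 + nu ^ 2 + Kratio nu u - Kratio nu u ^ 2) / u ^ 2).
Proof. intros Hu. derive_via_Kratio nu Hu. Qed.

Lemma is_derive_mul_dBesselK_div nu u : 0 < u ->
  is_derive (fun u => u * dBesselK nu u / BesselK nu u) u
    ((u ^ 2 + nu ^ 2 - Kratio nu u ^ 2) / u).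
Proof. intros Hu. derive_via_Kratio nu Hu. Qed.

Lemma is_derive_mul_dBesselK nu u : 0 < u ->
  is_derive (fun u => u * dBesselK nu u) u ((u ^ 2 + nu ^ 2) * BesselK nu u / u).
Proof. intros Hu. derive_via_Kratio nu Hu. Qed.

Lemma is_derive_sqr_mul_dBesselK nu u : 0 < u ->
  is_derive (fun u => u ^ 2 * dBesselK nu u) u
    (BesselK nu u * (u ^ 2 + nu ^ 2 - Kratio nu u)).
Proof. intros Hu. derive_via_Kratio nu Hu. Qed.

Lemma dBesselK_div_sqr_strict_decr nu : 1 <= Rabs nu ->
  strict_decr_from 0 (fun u => dBesselK nu u / BesselK nu u ^ 2).
Proof.
  intros Hnu. apply (strict_decr_from_derive _ _ 0 (is_derive_dBesselK_div_sqr nu)).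
  intros u Hu. pose proof (Kratio_sqr_gt nu u Hu). pose proof (Kratio_gt_sqrt nu u Hu).
  assert (1 <= nu ^ 2) by (rewrite <- pow2_abs; nra).
  assert (1 < sqrt (u ^ 2 + nu ^ 2)) by (rewrite <- sqrt_1; apply sqrt_lt_1; nra).
  pose proof (BesselK_pos nu u Hu).
  apply Rdiv_neg_pos; [nra | apply Rmult_lt_0_compat; [apply pow_lt |]; lra].
Qed.

Lemma dBesselK_div_strict_incr nu : strict_incr_from 0 (fun u => dBesselK nu u / BesselK nu u).
Proof.
  apply (strict_incr_from_derive _ _ 0 (is_derive_dBesselK_div nu)).
  intros u Hu. pose proof (Kratio_sqr_sub_lt nu u Hu).
  apply Rdiv_lt_0_compat; [lra | apply pow_lt, Hu].
Qed.

Lemma mul_dBesselK_div_strict_decr nu :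
  strict_decr_from 0 (fun u => u * dBesselK nu u / BesselK nu u).
Proof.
  apply (strict_decr_from_derive _ _ 0 (is_derive_mul_dBesselK_div nu)).
  intros u Hu. pose proof (Kratio_sqr_gt nu u Hu). apply Rdiv_neg_pos; lra.
Qed.

Lemma mul_dBesselK_strict_incr nu : strict_incr_from 0 (fun u => u * dBesselK nu u).
Proof.
  apply (strict_incr_from_derive _ _ 0 (is_derive_mul_dBesselK nu)).
  intros u Hu. pose proof (BesselK_pos nu u Hu).
  apply Rdiv_lt_0_compat; [apply Rmult_lt_0_compat; nra | exact Hu].
Qed.

Lemma sqr_mul_dBesselK_strict_incr_of nu a : 0 <= a ->
  (forall x, a < x -> 2 * x ^ 2 < (x ^ 2 + nu ^ 2) ^ 2 - (x ^ 2 + nu ^ 2)) ->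
  strict_incr_from a (fun u => u ^ 2 * dBesselK nu u).
Proof.
  intros Ha Hcond.
  apply (strict_incr_from_derive _ (fun u => BesselK nu u * (u ^ 2 + nu ^ 2 - Kratio nu u)) a).
  { intros u Hu. apply is_derive_sqr_mul_dBesselK. lra. }
  intros u Hu. pose proof (BesselK_pos nu u ltac:(lra)).
  pose proof (Kratio_lt_sum_sq nu a Ha Hcond u Hu).
  apply Rmult_lt_0_compat; lra.
Qed.

Lemma sqr_mul_dBesselK_strict_incr nu : 5 / 4 <= Rabs nu ->
  strict_incr_from 0 (fun u => u ^ 2 * dBesselK nu u).
Proof.
  intros Hnu. apply sqr_mul_dBesselK_strict_incr_of; [lra |].
  intros x Hx. assert (25 / 16 <= nu ^ 2) by (rewrite <- pow2_abs; nra).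
  assert (0 < x ^ 2) by nra. nra.
Qed.

Lemma sqr_mul_dBesselK_strict_incr_from_2 nu :
  strict_incr_from 2 (fun u => u ^ 2 * dBesselK nu u).
Proof.
  apply sqr_mul_dBesselK_strict_incr_of; [lra |].
  intros x Hx. assert (4 < x ^ 2) by nra. assert (0 <= nu ^ 2) by nra. nra.
Qed.

(** * Mean inequalities *)

Lemma midpoint_lt_of_derive_strict_incr (phi dphi : R -> R) a b : a < b ->
  (forall x, a <= x <= b -> is_derive phi x (dphi x)) ->
  (forall x y, a <= x -> x < y -> y <= b -> dphi x < dphi y) ->
  phi ((a + b) / 2) < (phi a + phi b) / 2.
Proof.
  intros Hab Hd Hincr. set (m := (a + b) / 2).
  destruct (MVT_is_derive phi dphi a m) as [c1 [Hc1 E1]];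
    [unfold m; lra | intros; apply Hd; unfold m in *; lra |].
  destruct (MVT_is_derive phi dphi m b) as [c2 [Hc2 E2]];
    [unfold m; lra | intros; apply Hd; unfold m in *; lra |].
  assert (dphi c1 < dphi c2) by (apply Hincr; lra).
  replace (m - a) with (b - m) in E1 by (unfold m; field).
  assert (dphi c1 * (b - m) < dphi c2 * (b - m)) by (apply Rmult_lt_compat_r; unfold m; lra).
  lra.
Qed.

Lemma midpoint_lt_of_derive_strict_incr_neq (phi dphi : R -> R) a b : a <> b ->
  (forall x, Rmin a b <= x <= Rmax a b -> is_derive phi x (dphi x)) ->
  (forall x y, Rmin a b <= x -> x < y -> y <= Rmax a b -> dphi x < dphi y) ->
  phi ((a + b) / 2) < (phi a + phi b) / 2.
Proof.
  intros Hne Hd Hincr. destruct (Rlt_or_le a b) as [Hab | Hba].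
  - rewrite Rmin_left, Rmax_right in * by lra.
    apply (midpoint_lt_of_derive_strict_incr phi dphi); assumption.
  - rewrite Rmin_right, Rmax_left in * by lra.
    rewrite (Rplus_comm a), (Rplus_comm (phi a)).
    apply (midpoint_lt_of_derive_strict_incr phi dphi); [lra | assumption | assumption].
Qed.

Lemma le_eq_iff_intro x y u1 u2 :
  (u1 <> u2 -> x < y) -> (u1 = u2 -> x = y) -> le_eq_iff x y u1 u2.
Proof.
  intros Hlt Heq. split.
  - destruct (Req_dec u1 u2) as [H | H]; [right; apply Heq, H | left; apply Hlt, H].
  - split; [| exact Heq]. intros Hxy.
    destruct (Req_dec u1 u2) as [| H]; [assumption |]. specialize (Hlt H). lra.
Qed.

Lemma sqrt_mult_exp_mean_ln a b : 0 < a -> 0 < b ->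
  sqrt (a * b) = exp ((ln a + ln b) / 2).
Proof.
  intros Ha Hb. apply sqrt_lem_1; [nra | left; apply exp_pos |].
  rewrite <- exp_plus. replace ((ln a + ln b) / 2 + (ln a + ln b) / 2) with (ln a + ln b) by field.
  rewrite exp_plus, !exp_ln; lra.
Qed.

Lemma pos_of_Rmin_le u1 u2 x : 0 < u1 -> 0 < u2 -> Rmin u1 u2 <= x -> 0 < x.
Proof. intros H1 H2 Hx. pose proof (Rmin_pos u1 u2 H1 H2). lra. Qed.

Lemma harmonic_mean_le_BesselK_arith_mean nu u1 u2 : 1 <= Rabs nu -> 0 < u1 -> 0 < u2 ->
  le_eq_iff (2 * BesselK nu u1 * BesselK nu u2 / (BesselK nu u1 + BesselK nu u2))
            (BesselK nu ((u1 + u2) / 2)) u1 u2.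
Proof.
  intros Hnu H1 H2.
  pose proof (BesselK_pos nu u1 H1) as HA. pose proof (BesselK_pos nu u2 H2) as HB.
  apply le_eq_iff_intro; [intros Hne | intros <-; replace ((u1 + u1) / 2) with u1; field; lra].
  assert (Hconv : / BesselK nu ((u1 + u2) / 2) < (/ BesselK nu u1 + / BesselK nu u2) / 2).
  { apply (midpoint_lt_of_derive_strict_incr_neq (fun x => / BesselK nu x)
             (fun x => - dBesselK nu x / BesselK nu x ^ 2) u1 u2 Hne).
    - intros x Hx. pose proof (pos_of_Rmin_le u1 u2 x H1 H2 (proj1 Hx)).
      apply (is_derive_inv (BesselK nu));
        [apply is_derive_BesselK | apply Rgt_not_eq, BesselK_pos]; lra.
    - intros x y Hx Hxy Hy. pose proof (pos_of_Rmin_le u1 u2 x H1 H2 Hx).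
      pose proof (dBesselK_div_sqr_strict_decr nu Hnu x y ltac:(lra) Hxy).
      unfold Rdiv in *. lra. }
  pose proof (BesselK_pos nu ((u1 + u2) / 2) ltac:(lra)) as HM.
  replace ((/ BesselK nu u1 + / BesselK nu u2) / 2)
    with (/ (2 * BesselK nu u1 * BesselK nu u2 / (BesselK nu u1 + BesselK nu u2)))
    in Hconv by (field; lra).
  assert (0 < 2 * BesselK nu u1 * BesselK nu u2 / (BesselK nu u1 + BesselK nu u2))
    by (apply Rdiv_lt_0_compat; nra).
  apply Rinv_lt_contravar in Hconv; [| apply Rmult_lt_0_compat; apply Rinv_0_lt_compat; lra].
  rewrite !Rinv_inv in Hconv. exact Hconv.
Qed.

Lemma BesselK_arith_mean_le_geom_mean nu u1 u2 : 0 < u1 -> 0 < u2 ->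
  le_eq_iff (BesselK nu ((u1 + u2) / 2)) (sqrt (BesselK nu u1 * BesselK nu u2)) u1 u2.
Proof.
  intros H1 H2.
  pose proof (BesselK_pos nu u1 H1) as HA. pose proof (BesselK_pos nu u2 H2) as HB.
  apply le_eq_iff_intro;
    [intros Hne | intros <-; replace ((u1 + u1) / 2) with u1 by field; rewrite sqrt_square; lra].
  assert (Hconv : ln (BesselK nu ((u1 + u2) / 2))
                  < (ln (BesselK nu u1) + ln (BesselK nu u2)) / 2).
  { apply (midpoint_lt_of_derive_strict_incr_neq (fun x => ln (BesselK nu x))
             (fun x => dBesselK nu x / BesselK nu x) u1 u2 Hne).
    - intros x Hx. pose proof (pos_of_Rmin_le u1 u2 x H1 H2 (proj1 Hx)) as Hx0.
      pose proof (BesselK_pos nu x Hx0).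
      replace (dBesselK nu x / BesselK nu x) with (scal (dBesselK nu x) (/ BesselK nu x))
        by reflexivity.
      apply (is_derive_comp ln (BesselK nu));
        [apply is_derive_ln; lra | apply is_derive_BesselK; lra].
    - intros x y Hx Hxy Hy. pose proof (pos_of_Rmin_le u1 u2 x H1 H2 Hx).
      apply (dBesselK_div_strict_incr nu x y); lra. }
  rewrite sqrt_mult_exp_mean_ln by assumption.
  rewrite <- (exp_ln (BesselK nu ((u1 + u2) / 2))) by (apply BesselK_pos; lra).
  apply exp_increasing, Hconv.
Qed.

Lemma geom_mean_le_BesselK_geom_mean nu u1 u2 : 0 < u1 -> 0 < u2 ->
  le_eq_iff (sqrt (BesselK nu u1 * BesselK nu u2)) (BesselK nu (sqrt (u1 * u2))) u1 u2.
Proof.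
  intros H1 H2.
  pose proof (BesselK_pos nu u1 H1) as HA. pose proof (BesselK_pos nu u2 H2) as HB.
  apply le_eq_iff_intro; [intros Hne | intros <-; rewrite !sqrt_square; lra].
  assert (Hln : ln u1 <> ln u2) by (intros Heq; apply Hne, ln_inv; assumption).
  assert (Hconv : - ln (BesselK nu (exp ((ln u1 + ln u2) / 2)))
                  < (- ln (BesselK nu (exp (ln u1))) + - ln (BesselK nu (exp (ln u2)))) / 2).
  { apply (midpoint_lt_of_derive_strict_incr_neq (fun x => - ln (BesselK nu (exp x)))
             (fun x => - (exp x * dBesselK nu (exp x) / BesselK nu (exp x))) _ _ Hln).
    - intros x _. pose proof (exp_pos x) as Hx. pose proof (BesselK_pos nu (exp x) Hx).
      auto_derive; [repeat split; [apply ex_derive_BesselK | ]; lra |].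
      change (Derive (fun x => BesselK nu x) (exp x)) with (dBesselK nu (exp x)).
      field. lra.
    - intros x y _ Hxy _.
      pose proof (mul_dBesselK_div_strict_decr nu (exp x) (exp y) (exp_pos x)
                    (exp_increasing x y Hxy)).
      lra. }
  rewrite <- sqrt_mult_exp_mean_ln, !exp_ln in Hconv by assumption.
  rewrite sqrt_mult_exp_mean_ln by assumption.
  rewrite <- (exp_ln (BesselK nu (sqrt (u1 * u2)))) by (apply BesselK_pos, sqrt_lt_R0; nra).
  apply exp_increasing. lra.
Qed.

Lemma BesselK_geom_mean_le_arith_mean nu u1 u2 : 0 < u1 -> 0 < u2 ->
  le_eq_iff (BesselK nu (sqrt (u1 * u2))) ((BesselK nu u1 + BesselK nu u2) / 2) u1 u2.
Proof.
  intros H1 H2.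
  apply le_eq_iff_intro; [intros Hne | intros <-; rewrite !sqrt_square; lra].
  assert (Hln : ln u1 <> ln u2) by (intros Heq; apply Hne, ln_inv; assumption).
  assert (Hconv : BesselK nu (exp ((ln u1 + ln u2) / 2))
                  < (BesselK nu (exp (ln u1)) + BesselK nu (exp (ln u2))) / 2).
  { apply (midpoint_lt_of_derive_strict_incr_neq (fun x => BesselK nu (exp x))
             (fun x => exp x * dBesselK nu (exp x)) _ _ Hln).
    - intros x _.
      apply (is_derive_comp (BesselK nu) exp);
        [apply is_derive_BesselK, exp_pos | apply is_derive_exp].
    - intros x y _ Hxy _.
      apply (mul_dBesselK_strict_incr nu (exp x) (exp y) (exp_pos x) (exp_increasing x y Hxy)). }
  rewrite <- sqrt_mult_exp_mean_ln, !exp_ln in Hconv by assumption.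
  exact Hconv.
Qed.

Lemma lt_inv_of_le_Rmax_inv a u1 u2 x : 0 <= a -> a < u1 -> a < u2 ->
  x <= Rmax (/ u1) (/ u2) -> 0 < x -> a < / x.
Proof.
  intros Ha H1 H2 Hx Hx0.
  assert (Hle : forall u, a < u -> x <= / u -> a < / x).
  { intros u Hu Hxu. apply Rlt_le_trans with u; [exact Hu |].
    rewrite <- (Rinv_inv u). apply Rinv_le_contravar; assumption. }
  destruct (Rle_dec (/ u1) (/ u2)).
  - rewrite Rmax_right in Hx by assumption. apply (Hle u2); assumption.
  - rewrite Rmax_left in Hx by lra. apply (Hle u1); assumption.
Qed.

(* [x |-> K (1/x)] has derivative [- (1/x)^2 K'(1/x)], increasing whenever
   [u^2 K'(u)] is. *)
Lemma BesselK_harmonic_mean_le_arith_mean nu a u1 u2 : 0 <= a ->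
  strict_incr_from a (fun u => u ^ 2 * dBesselK nu u) -> a < u1 -> a < u2 ->
  le_eq_iff (BesselK nu (2 * u1 * u2 / (u1 + u2))) ((BesselK nu u1 + BesselK nu u2) / 2) u1 u2.
Proof.
  intros Ha Hincr H1 H2.
  apply le_eq_iff_intro;
    [intros Hne | intros <-; replace (2 * u1 * u1 / (u1 + u1)) with u1; field; lra].
  assert (Hinv : / u1 <> / u2)
    by (intros Heq; apply Hne; rewrite <- (Rinv_inv u1), Heq, Rinv_inv; reflexivity).
  assert (Hdom : forall x, Rmin (/ u1) (/ u2) <= x <= Rmax (/ u1) (/ u2) -> 0 < x /\ a < / x).
  { intros x Hx.
    assert (0 < x) by (apply (pos_of_Rmin_le (/ u1) (/ u2)); try apply Rinv_0_lt_compat; lra).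
    split; [assumption | apply (lt_inv_of_le_Rmax_inv a u1 u2); lra]. }
  assert (Hconv : BesselK nu (/ ((/ u1 + / u2) / 2))
                  < (BesselK nu (/ / u1) + BesselK nu (/ / u2)) / 2).
  { apply (midpoint_lt_of_derive_strict_incr_neq (fun x => BesselK nu (/ x))
             (fun x => - ((/ x) ^ 2 * dBesselK nu (/ x))) _ _ Hinv).
    - intros x Hx. destruct (Hdom x Hx) as [Hx0 Hax].
      auto_derive; [split; [apply ex_derive_BesselK; lra | split; [lra | exact I]] |].
      change (Derive (fun x => BesselK nu x) (/ x)) with (dBesselK nu (/ x)).
      field. lra.
    - intros x y Hx Hxy Hy.
      destruct (Hdom x ltac:(split; [| pose proof (Rmin_Rmax (/ u1) (/ u2))]; lra)) as [Hx0 _].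
      destruct (Hdom y ltac:(split; [pose proof (Rmin_Rmax (/ u1) (/ u2)) |]; lra)) as [Hy0 Hay].
      pose proof (Hincr (/ y) (/ x) Hay (Rinv_lt_contravar x y ltac:(nra) Hxy)).
      lra. }
  rewrite !Rinv_inv in Hconv.
  replace (/ ((/ u1 + / u2) / 2)) with (2 * u1 * u2 / (u1 + u2)) in Hconv by (field; lra).
  exact Hconv.
Qed.

Theorem theorem2 :
  (forall nu, 1 <= Rabs nu ->
     strict_decr_from 0 (fun u => dBesselK nu u / (BesselK nu u) ^ 2)) /\
  (forall nu, strict_incr_from 0 (fun u => dBesselK nu u / BesselK nu u)) /\
  (forall nu, strict_decr_from 0 (fun u => u * dBesselK nu u / BesselK nu u)) /\
  (forall nu, strict_incr_from 0 (fun u => u * dBesselK nu u)) /\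
  (forall nu, 5 / 4 <= Rabs nu ->
     strict_incr_from 0 (fun u => u ^ 2 * dBesselK nu u)) /\
  (forall nu, strict_incr_from 2 (fun u => u ^ 2 * dBesselK nu u)) /\
  (forall nu u1 u2, 1 <= Rabs nu -> 0 < u1 -> 0 < u2 ->
     le_eq_iff (2 * BesselK nu u1 * BesselK nu u2 / (BesselK nu u1 + BesselK nu u2))
               (BesselK nu ((u1 + u2) / 2)) u1 u2) /\
  (forall nu u1 u2, 0 < u1 -> 0 < u2 ->
     le_eq_iff (BesselK nu ((u1 + u2) / 2))
               (sqrt (BesselK nu u1 * BesselK nu u2)) u1 u2 /\
     le_eq_iff (sqrt (BesselK nu u1 * BesselK nu u2))
               (BesselK nu (sqrt (u1 * u2))) u1 u2 /\
     le_eq_iff (BesselK nu (sqrt (u1 * u2)))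
               ((BesselK nu u1 + BesselK nu u2) / 2) u1 u2) /\
  (forall nu u1 u2, 5 / 4 <= Rabs nu -> 0 < u1 -> 0 < u2 ->
     le_eq_iff (BesselK nu (2 * u1 * u2 / (u1 + u2)))
               ((BesselK nu u1 + BesselK nu u2) / 2) u1 u2) /\
  (forall nu u1 u2, 2 < u1 -> 2 < u2 ->
     le_eq_iff (BesselK nu (2 * u1 * u2 / (u1 + u2)))
               ((BesselK nu u1 + BesselK nu u2) / 2) u1 u2).
Proof.
  split; [exact dBesselK_div_sqr_strict_decr |].
  split; [exact dBesselK_div_strict_incr |].
  split; [exact mul_dBesselK_div_strict_decr |].
  split; [exact mul_dBesselK_strict_incr |].
  split; [exact sqr_mul_dBesselK_strict_incr |].
  split; [exact sqr_mul_dBesselK_strict_incr_from_2 |].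
  split; [exact harmonic_mean_le_BesselK_arith_mean |].
  split.
  { intros nu u1 u2 H1 H2. split; [| split].
    - apply BesselK_arith_mean_le_geom_mean; assumption.
    - apply geom_mean_le_BesselK_geom_mean; assumption.
    - apply BesselK_geom_mean_le_arith_mean; assumption. }
  split.
  - intros nu u1 u2 Hnu H1 H2. apply (BesselK_harmonic_mean_le_arith_mean nu 0); try lra.
    apply sqr_mul_dBesselK_strict_incr, Hnu.
  - intros nu u1 u2 H1 H2. apply (BesselK_harmonic_mean_le_arith_mean nu 2); try lra.
    apply sqr_mul_dBesselK_strict_incr_from_2.
Qed.
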